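(* Let $k$ be a positive integer, let $G$ be a multigraph, and let $A,B$ be nonempty sets of vertices such that $A$ is contained in one equivalence class of $\sim_k$ and $B$ is contained in a different equivalence class of $\sim_k$. Then there is a set $X$ of at most $k-1$ edges of $G$ such that $G-X$ contains no $A$--$B$-path (i.e., $X$ separates $A$ and $B$).
   Context: For vertices $u,v$ of a multigraph $G$, $u\sim_k v$ means that either $u=v$ or there are $k$ pairwise edge-disjoint $u$--$v$-paths in $G$; this is an equivalence relation on $V(G)$. $G-X$ denotes $G$ with the edges of $X$ deleted. *)

(* A finite multigraph is given by a finite vertex type V,
   a finite edge type E and an endpoint map  ends : E -> V * V
   (parallel edges and loops allowed). *)
From mathcomp Require Import all_boot.
Set Implicit Arguments. Unset Strict Implicit. Unset Printing Implicit Defensive.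

Section Multigraph.
Variables (V E : finType) (ends : E -> V * V).

Definition joins (e : E) (x y : V) : bool :=
  (ends e == (x, y)) || (ends e == (y, x)).

(* A walk from x given as the sequence of steps (edge, next vertex). *)
Fixpoint walk (x : V) (p : seq (E * V)) : bool :=
  if p is (e, y) :: p' then joins e x y && walk y p' else true.

Definition path_verts (x : V) (p : seq (E * V)) : seq V := x :: map snd p.
Definition path_edges (p : seq (E * V)) : seq E := map fst p.

Definition is_path (u v : V) (p : seq (E * V)) : Prop :=
  [/\ walk u p, uniq (path_verts u p) & last u (map snd p) = v].

Definition kequiv (k : nat) (u v : V) : Prop :=
  u = v \/
  exists P : 'I_k -> seq (E * V),
    (forall i, is_path u v (P i)) /\
    (forall i j, i != j ->
       [disjoint [pred e | e \in path_edges (P i)] &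
                 [pred e | e \in path_edges (P j)]]).

(* An A--B path (Diestel): a path x0 ... xn meeting A exactly in x0 and
   B exactly in xn. *)
Definition is_AB_path (A B : {set V}) (x : V) (p : seq (E * V)) : Prop :=
  [/\ walk x p, uniq (path_verts x p),
      [seq y <- path_verts x p | y \in A] = [:: x] &
      [seq y <- path_verts x p | y \in B] = [:: last x (map snd p)]].

Definition has_AB_path_avoiding (A B : {set V}) (X : {set E}) : Prop :=
  exists x p, is_AB_path A B x p /\ all (fun e => e \notin X) (path_edges p).

End Multigraph.

(* By the edge version of Menger's theorem (proved here by augmenting paths),
   a0 and b0 being k-inequivalent yields a vertex set R with a0 in R, b0 not
   in R, and fewer than k edges leaving R.  Any vertex k-equivalent to a0 is
   joined to it by k edge-disjoint paths, each of which would cross the cut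
   if the vertex lay outside R; so A lies inside R and likewise B outside R,
   and the cut edges separate A from B. *)
From mathcomp Require Import all_boot all_order all_algebra.
From mathcomp Require Import ring.

Set Implicit Arguments. Unset Strict Implicit. Unset Printing Implicit Defensive.

Import Order.TTheory GRing.Theory Num.Theory.

Lemma filter_eq_seq1 (T : eqType) (a : pred T) s x : [seq y <- s | a y] = [:: x] -> a x.
Proof. by move=> Hs; have := mem_head x [::]; rewrite -Hs mem_filter => /andP[]. Qed.

Section EdgeMenger.
Local Open Scope ring_scope.

Variables (V E : finType) (ends : E -> V * V).

Local Notation edge_rel := (E -> V -> V -> bool).

Lemma joinsC e a b : joins ends e a b = joins ends e b a.
Proof. by rewrite /joins orbC. Qed.

Lemma joins_ends e : joins ends e (ends e).1 (ends e).2.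
Proof. by rewrite /joins; case: (ends e) => a b; rewrite eqxx. Qed.

Definition cut (R : {set V}) := [set e | ((ends e).1 \in R) != ((ends e).2 \in R)].

Fixpoint allsteps (r : edge_rel) x (P : seq (E * V)) : bool :=
  if P is (e, y) :: P' then r e x y && allsteps r y P' else true.

Lemma walkE x P : walk ends x P = allsteps (joins ends) x P.
Proof. by elim: P x => [|[e y] P IH] x //=; rewrite IH. Qed.

Lemma sub_allsteps (r r' : edge_rel) x P :
  (forall e a b, r e a b -> r' e a b) -> allsteps r x P -> allsteps r' x P.
Proof.
move=> Hr; elim: P x => [|[e y] P IH] x //= /andP[He HP].
by rewrite Hr // IH.
Qed.

Lemma path_verts_cons x e y (P : seq (E * V)) :
  path_verts x ((e, y) :: P) = x :: path_verts y P.
Proof. by []. Qed.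

Lemma allsteps_edge (r : edge_rel) x P e :
  allsteps r x P -> e \in path_edges P ->
  exists a b, [/\ r e a b, a \in path_verts x P & b \in path_verts x P].
Proof.
elim: P x => [|[e' y] P IH] x //= /andP[Hr HP].
rewrite /path_edges /= inE => /orP[/eqP ->|He].
  by exists x, y; rewrite Hr !inE !eqxx orbT.
have [a [b [Hab Ha Hb]]] := IH _ HP He.
by exists a, b; split; rewrite // path_verts_cons in_cons ?Ha ?Hb orbT.
Qed.

Lemma walk_uniq_edges x P :
  walk ends x P -> uniq (path_verts x P) -> uniq (path_edges P).
Proof.
rewrite walkE; elim: P x => [|[e y] P IH] x //= /andP[Hxy HP].
move=> /andP[Hx Hu]; rewrite /path_edges /= (IH y) // andbT.
apply/negP => /(allsteps_edge HP) [a [b [Hab Ha Hb]]].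
have Hx_ab : (x == a) || (x == b).
  by move: Hxy Hab; rewrite /joins => /orP[] /eqP -> /orP[] /eqP[<- <-];
     rewrite eqxx ?orbT.
by case/orP: Hx_ab => /eqP Hxe; move/negP: Hx; rewrite Hxe; apply.
Qed.

Lemma walk_crosses_cut (R : {set V}) x P : walk ends x P ->
  (x \in R) != (last x (map snd P) \in R) ->
  exists2 e, e \in path_edges P & e \in cut R.
Proof.
elim: P x => [|[e y] P IH] x /=; first by rewrite eqxx.
move=> /andP[Hxy HP] Hne; rewrite /path_edges /=.
have [Hs|Hs] := eqVneq (x \in R) (y \in R).
  rewrite Hs in Hne; have [e' He' Hc] := IH _ HP Hne.
  by exists e'; first exact: mem_behead.
exists e; first by rewrite inE eqxx.
by rewrite inE; move: Hxy; rewrite /joins => /orP[] /eqP -> //=; rewrite eq_sym.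
Qed.

Definition step_rel (r : edge_rel) : rel V := fun a b => [exists e, r e a b].

Definition reach (r : edge_rel) s := [set y | connect (step_rel r) s y].

Lemma reach_source (r : edge_rel) s : s \in reach r s.
Proof. by rewrite inE connect0. Qed.

Lemma reach_closed (r : edge_rel) s e a b :
  a \in reach r s -> r e a b -> b \in reach r s.
Proof.
rewrite !inE => Ha Hr; apply: connect_trans Ha (connect1 _).
by apply/existsP; exists e.
Qed.

Fixpoint steps_of (r : edge_rel) x (q : seq V) : seq (E * V) :=
  if q is y :: q' then
    if [pick e | r e x y] is Some e then (e, y) :: steps_of r y q' else steps_of r y q'
  else [::].

Lemma steps_ofP (r : edge_rel) x q : path (step_rel r) x q ->
  map snd (steps_of r x q) = q /\ allsteps r x (steps_of r x q).
Proof.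
elim: q x => [|y q IH] x //= /andP[/existsP[e0 He0] Hq].
case: pickP => [e He|H]; last by rewrite H in He0.
by have [Hm Hs] := IH _ Hq; rewrite /= Hm He Hs.
Qed.

Lemma reach_path (r : edge_rel) s t :
  (forall e a b, r e a b -> joins ends e a b) ->
  t \in reach r s -> exists P, allsteps r s P /\ is_path ends s t P.
Proof.
move=> Hr; rewrite inE => /connectP[p Hp ->].
have [q Hq Hu _] := shortenP Hp; have [Hm Hs] := steps_ofP Hq.
exists (steps_of r s q); split=> //; split; rewrite /path_verts ?Hm //.
by rewrite walkE (sub_allsteps Hr).
Qed.

(** * Unit flows *)

(* Each edge carries either nothing or one unit of flow in a chosen direction. *)
Definition flow := {ffun E -> option (V * V)}.

Definition valid_flow (f : flow) := forall e a b, f e = Some (a, b) -> joins ends e a b.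

Definition arc_excess (o : option (V * V)) (v : V) : int :=
  if o is Some (a, b) then (a == v)%:R - (b == v)%:R else 0.

Definition excess (f : flow) v : int := \sum_e arc_excess (f e) v.

Definition conservative (f : flow) s t := forall v, v != s -> v != t -> excess f v = 0.

Definition st_flow (f : flow) s t (j : nat) :=
  [/\ valid_flow f, conservative f s t & excess f s = j%:R].

Definition set_flow (f : flow) e o : flow := [ffun e' => if e' == e then o else f e'].

Lemma set_flowE f e o e' : set_flow f e o e' = if e' == e then o else f e'.
Proof. by rewrite ffunE. Qed.

Lemma excess_set_flow f e o v :
  excess (set_flow f e o) v = excess f v - arc_excess (f e) v + arc_excess o v.
Proof.
rewrite /excess (bigD1 e) //= [in RHS](bigD1 e) //= set_flowE eqxx.
rewrite (eq_bigr (fun e' => arc_excess (f e') v)) => [|e' /negPf He'].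
  by ring.
by rewrite set_flowE He'.
Qed.

Fixpoint update_along (g : E -> option (V * V) -> V -> V -> option (V * V))
    (f : flow) x (P : seq (E * V)) : flow :=
  if P is (e, y) :: P' then update_along g (set_flow f e (g e (f e) x y)) y P' else f.

Lemma update_along_off g f x P e :
  e \notin path_edges P -> update_along g f x P e = f e.
Proof.
elim: P x f => [|[e' y] P IH] x f //=.
rewrite /path_edges /= inE negb_or => /andP[He' HP].
by rewrite IH // set_flowE (negPf He').
Qed.

Lemma clear_along_on f x P e : e \in path_edges P ->
  update_along (fun _ _ _ _ => None) f x P e = None.
Proof.
elim: P x f => [|[e' y] P IH] x f //=; rewrite /path_edges /= inE.
have [HP _|HP] := boolP (e \in path_edges P); first exact: IH.
by rewrite orbF => /eqP Hee; subst e'; rewrite update_along_off // set_flowE eqxx.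
Qed.

Lemma valid_update_along g f x P : valid_flow f ->
  (forall e o a b c d, g e o a b = Some (c, d) -> joins ends e c d) ->
  valid_flow (update_along g f x P).
Proof.
move=> Hf Hg; elim: P x f Hf => [|[e y] P IH] x f Hf //=; apply: IH.
by move=> e' a b; rewrite set_flowE; case: eqP => [-> /Hg | _ /Hf].
Qed.

Lemma excess_update_along g (r : edge_rel) (f : flow) (sg : int) :
  (forall e a b, r e a b -> forall v,
      arc_excess (g e (f e) a b) v - arc_excess (f e) v
      = sg * ((a == v)%:R - (b == v)%:R)) ->
  forall P x (fc : flow), uniq (path_edges P) -> allsteps r x P ->
  {in path_edges P, fc =1 f} ->
  forall v, excess (update_along g fc x P) v =
    excess fc v + sg * ((x == v)%:R - (last x (map snd P) == v)%:R).
Proof.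
move=> Hg; elim=> [|[e y] P IH] x fc /=; first by move=> *; rewrite subrr mulr0 addr0.
rewrite /path_edges /= => /andP[He Hu] /andP[Hr HP] Hfc v.
rewrite IH //; last first.
  move=> e' He'; rewrite set_flowE; case: eqP => [Hee|_].
    by subst e'; rewrite He' in He.
  by rewrite Hfc ?inE ?He' ?orbT.
rewrite excess_set_flow Hfc ?inE ?eqxx //.
have -> : arc_excess (g e (f e) x y) v
    = arc_excess (f e) v + sg * ((x == v)%:R - (y == v)%:R).
  by rewrite -(Hg _ _ _ Hr) addrC subrK.
ring.
Qed.

Lemma update_path_st_flow g (r : edge_rel) (f : flow) (sg : int) s t j P :
  (forall e a b, r e a b -> forall v,
      arc_excess (g e (f e) a b) v - arc_excess (f e) v
      = sg * ((a == v)%:R - (b == v)%:R)) ->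
  (forall e o a b c d, g e o a b = Some (c, d) -> joins ends e c d) ->
  s != t -> st_flow f s t j -> allsteps r s P -> is_path ends s t P ->
  [/\ valid_flow (update_along g f s P), conservative (update_along g f s P) s t
    & excess (update_along g f s P) s = j%:R + sg].
Proof.
move=> Hg Hvalid Hst [Hf Hc Hj] Hr [Hw Hu Hl].
have Hex := excess_update_along Hg (walk_uniq_edges Hw Hu) Hr (fun _ _ => erefl).
split; first exact: valid_update_along.
  move=> v Hvs Hvt; rewrite Hex Hc // Hl !(eq_sym _ v) (negPf Hvs) (negPf Hvt) /=.
  by ring.
by rewrite Hex Hj Hl eqxx eq_sym (negPf Hst) /=; ring.
Qed.

Lemma sum_eq_in (R : {set V}) a : \sum_(v in R) ((a == v)%:R : int) = (a \in R)%:R.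
Proof.
have [Ha|Ha] := boolP (a \in R).
  rewrite (bigD1 a) //= eqxx big1 ?addr0 // => v /andP[_ Hv].
  by rewrite eq_sym (negPf Hv).
by rewrite big1 // => v Hv; case: eqP => // Hav; subst; rewrite Hv in Ha.
Qed.

Lemma sum_arc_excess_in (R : {set V}) o : \sum_(v in R) arc_excess o v =
  if o is Some (a, b) then (a \in R)%:R - (b \in R)%:R else 0.
Proof. by case: o => [[a b]|] /=; [rewrite sumrB !sum_eq_in | rewrite big1]. Qed.

Lemma sum_excess_conservative f s t (R : {set V}) :
  conservative f s t -> s \in R -> t \notin R ->
  \sum_(v in R) excess f v = excess f s.
Proof.
move=> Hc Hs Ht; rewrite (bigD1 s) //= big1 ?addr0 // => v /andP[Hv Hvs].
by apply: Hc => //; apply: contraNneq Ht => <-.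
Qed.

Definition residual (f : flow) e a b :=
  ((f e == None) && joins ends e a b) || (f e == Some (b, a)).

Definition carries (f : flow) e a b := f e == Some (a, b).

(* Every edge of the cut of a residually closed set carries flow out of it. *)
Lemma residual_closed_excess f (R : {set V}) : valid_flow f ->
  (forall e a b, a \in R -> residual f e a b -> b \in R) ->
  \sum_(v in R) excess f v = #|cut R|%:R.
Proof.
move=> Hf HR; rewrite /excess exchange_big /= -sum1_card natr_sum [RHS]big_mkcond /=.
apply: eq_bigr => e _; rewrite sum_arc_excess_in inE.
case Hfe: (f e) => [[a b]|].
  have Hba : b \in R -> a \in R.
    by move=> Hb; apply: (HR e b a Hb); rewrite /residual Hfe eqxx orbT.
  move: (Hf _ _ _ Hfe); rewrite /joins => /orP[] /eqP -> /=;
    case Ha: (a \in R); case Hb: (b \in R) => //=; rewrite ?subrr ?subr0 //;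
    by move: Ha (Hba Hb) => ->.
have H12 : (ends e).1 \in R -> (ends e).2 \in R.
  by move=> H1; apply: (HR e _ _ H1); rewrite /residual Hfe joins_ends.
have H21 : (ends e).2 \in R -> (ends e).1 \in R.
  by move=> H2; apply: (HR e _ _ H2); rewrite /residual Hfe joinsC joins_ends.
by case E1: ((ends e).1 \in R); case E2: ((ends e).2 \in R);
   rewrite //; [move: (H12 E1) | move: (H21 E2)]; rewrite ?E1 ?E2.
Qed.

Lemma forward_closed_excess f (R : {set V}) :
  (forall e a b, a \in R -> carries f e a b -> b \in R) ->
  \sum_(v in R) excess f v <= 0.
Proof.
move=> HR; rewrite /excess exchange_big /=.
apply: sumr_le0 => e _; rewrite sum_arc_excess_in; case Hfe: (f e) => [[a b]|] //.
case Ha: (a \in R); last by case: (b \in R).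
by rewrite (HR e a b) ?Ha // /carries Hfe.
Qed.

(** * Augmenting paths and path decomposition *)

Definition augment e (o : option (V * V)) a b :=
  if o is None then (if joins ends e a b then Some (a, b) else None) else None.

Lemma augment_or_cut f s t j : s != t -> st_flow f s t j ->
  (exists f', st_flow f' s t j.+1) \/
  (exists2 R : {set V}, s \in R /\ t \notin R & #|cut R| = j).
Proof.
move=> Hst [Hf Hc Hj]; set R := reach (residual f) s.
have Hres : forall e a b, residual f e a b -> joins ends e a b.
  by move=> e a b /orP[/andP[_ ->] // | /eqP /Hf]; rewrite joinsC.
have [Ht|Ht] := boolP (t \in R).
  left; have [P [Hr HP]] := reach_path Hres Ht.
  have Hstep : forall e a b, residual f e a b -> forall v,
      arc_excess (augment e (f e) a b) v - arc_excess (f e) v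
      = 1 * ((a == v)%:R - (b == v)%:R).
    by move=> e a b /orP[/andP[/eqP -> Hab] | /eqP ->] v; rewrite /= ?Hab /=; ring.
  have Hvalid : forall e o a b c d, augment e o a b = Some (c, d) -> joins ends e c d.
    by move=> e [] // a b c d /=; case: ifP => // Hab [<- <-].
  have [Hf' Hc' Hj'] := update_path_st_flow Hstep Hvalid Hst (And3 Hf Hc Hj) Hr HP.
  by exists (update_along augment f s P); split; rewrite // Hj' -natr1.
right; exists R; first by split; first exact: reach_source.
apply/eqP; rewrite -(eqr_nat int) -Hj.
rewrite -(sum_excess_conservative Hc (reach_source _ _) Ht).
by rewrite (residual_closed_excess Hf (@reach_closed _ s)).
Qed.

Lemma max_flow_or_min_cut s t j : s != t ->
  (exists f, st_flow f s t j) \/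
  (exists2 R : {set V}, s \in R /\ t \notin R & (#|cut R| < j)%N).
Proof.
move=> Hst; elim: j => [|j [[f Hf]|[R HR Hcut]]].
- left; exists [ffun => None].
  by split=> [e a b|v _ _|]; rewrite ?ffunE // /excess big1 // => e _; rewrite ffunE.
- case: (augment_or_cut Hst Hf) => [|[R HR Hcut]]; first by left.
  by right; exists R; rewrite ?Hcut.
- by right; exists R; rewrite // ltnW.
Qed.

Lemma peel_path f s t j : s != t -> st_flow f s t j.+1 ->
  exists P f', [/\ is_path ends s t P, st_flow f' s t j,
    {in path_edges P, forall e, f e != None} &
    forall e, f' e != None -> e \notin path_edges P /\ f e != None].
Proof.
move=> Hst Hflow; have [Hf Hc Hj] := Hflow; set R := reach (carries f) s.
have Ht : t \in R.
  apply: contraT => Ht; have := @forward_closed_excess f R (@reach_closed _ s).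
  by rewrite (sum_excess_conservative Hc (reach_source _ _) Ht) Hj leNgt ltr0Sn.
have Hcar : forall e a b, carries f e a b -> joins ends e a b by move=> e a b /eqP /Hf.
have [P [Hr HP]] := reach_path Hcar Ht.
have Hstep : forall e a b, carries f e a b -> forall v,
    arc_excess None v - arc_excess (f e) v = (-1) * ((a == v)%:R - (b == v)%:R).
  by move=> e a b /eqP -> v /=; ring.
have Hnone : forall e (o : option (V * V)) (a b c d : V),
    None = Some (c, d) -> joins ends e c d by [].
have [Hf' Hc' Hj'] :=
  update_path_st_flow (g := fun _ _ _ _ => None) Hstep Hnone Hst Hflow Hr HP.
exists P, (update_along (fun _ _ _ _ => None) f s P); split=> //.
- by split; rewrite // Hj' -natr1 addrK.
- by move=> e /(allsteps_edge Hr) [a [b [/eqP -> _ _]]].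
move=> e; have [He|He] := boolP (e \in path_edges P); first by rewrite clear_along_on.
by rewrite update_along_off.
Qed.

Lemma flow_decomposition s t j f : s != t -> st_flow f s t j ->
  exists F : nat -> seq (E * V),
   [/\ forall i, (i < j)%N -> is_path ends s t (F i),
       forall i, (i < j)%N -> {in path_edges (F i), forall e, f e != None} &
       forall i i', (i < j)%N -> (i' < j)%N -> i != i' ->
         [disjoint [pred e | e \in path_edges (F i)] &
                   [pred e | e \in path_edges (F i')]]].
Proof.
move=> Hst; elim: j f => [|j IH] f Hflow; first by exists (fun _ => [::]).
have [P [f' [HP Hflow' HPf Hf']]] := peel_path Hst Hflow.
have [F [HF Hused HFd]] := IH f' Hflow'.
have HPF : forall i, (i < j)%N ->
    [disjoint [pred e | e \in path_edges P] & [pred e | e \in path_edges (F i)]].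
  move=> i Hi; apply/pred0P => e /=; apply/andP => -[He /(Hused _ Hi) /Hf' [Hn _]].
  by rewrite He in Hn.
exists (fun n => if n == j then P else F n); split.
- move=> i; rewrite ltnS leq_eqVlt => /orP[/eqP ->|Hi]; first by rewrite eqxx.
  by rewrite (ltn_eqF Hi); apply: HF.
- move=> i; rewrite ltnS leq_eqVlt => /orP[/eqP ->|Hi]; first by rewrite eqxx.
  by rewrite (ltn_eqF Hi) => e /(Hused _ Hi) /Hf' [].
move=> i i'; rewrite !ltnS [(i <= j)%N]leq_eqVlt [(i' <= j)%N]leq_eqVlt.
move=> /orP[/eqP ->|Hi] /orP[/eqP ->|Hi'] Hii'.
- by rewrite eqxx in Hii'.
- by rewrite eqxx (ltn_eqF Hi'); apply: HPF.
- by rewrite eqxx (ltn_eqF Hi) disjoint_sym; apply: HPF.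
- by rewrite (ltn_eqF Hi) (ltn_eqF Hi'); apply: HFd.
Qed.

Lemma small_cut_of_not_kequiv k s t : ~ kequiv ends k s t ->
  exists2 R : {set V}, s \in R /\ t \notin R & (#|cut R| < k)%N.
Proof.
move=> Hk; have Hst : s != t by apply/eqP => Hst; apply: Hk; left.
case: (max_flow_or_min_cut k Hst) => [[f Hf]|//]; exfalso; apply: Hk; right.
have [F [HF _ HFd]] := flow_decomposition Hst Hf.
by exists (fun i : 'I_k => F i); split=> [i | i i' Hii']; [apply: HF | apply: HFd].
Qed.

(* Each of the k edge-disjoint paths crosses the cut in its own edge. *)
Lemma kequiv_cut_le k (R : {set V}) u v : (u \in R) != (v \in R) ->
  kequiv ends k u v -> (k <= #|cut R|)%N.
Proof.
move=> Huv [Heq|[P [HP Hd]]]; first by subst; rewrite eqxx in Huv.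
have Hcross i : exists e, e \in cut R /\ e \in path_edges (P i).
  have [Hw _ Hl] := HP i; have := walk_crosses_cut (R := R) Hw; rewrite Hl.
  by case/(_ Huv) => e; exists e.
have [g Hg] := fin_all_exists Hcross.
have Hinj : injective g.
  move=> i i' Hii'; apply/eqP; apply: contraTT isT => Hne.
  have [_ H1] := Hg i; have [_ H2] := Hg i'.
  by have := disjointFr (Hd _ _ Hne) H1; rewrite inE Hii' H2.
rewrite -[k]card_ord -(card_imset _ Hinj); apply: subset_leq_card.
by apply/subsetP => e /imsetP [i _ ->]; case: (Hg i).
Qed.

End EdgeMenger.

Theorem lemma9 (V E : finType) (ends : E -> V * V) (k : nat) (A B : {set V}) :
  0 < k ->
  A != set0 -> B != set0 ->
  (exists a0 b0 : V,
     ~ kequiv ends k a0 b0 /\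
     (forall a, a \in A -> kequiv ends k a a0) /\
     (forall b, b \in B -> kequiv ends k b b0)) ->
  exists X : {set E}, #|X| <= k - 1 /\ ~ has_AB_path_avoiding ends A B X.
Proof.
move=> Hk _ _ [a0 [b0 [Hab [HA HB]]]].
have [R [Ha0 Hb0] Hcut] := small_cut_of_not_kequiv Hab.
have same_side u w : kequiv ends k u w -> (u \in R) = (w \in R).
  by move=> Huw; apply: contraTeq Hcut => /kequiv_cut_le /(_ Huw); rewrite -leqNgt.
exists (cut ends R); split; first by rewrite subn1 -ltnS prednK.
move=> [x [P [[Hw _ HfA HfB] Hall]]].
have HxA : x \in A := filter_eq_seq1 HfA.
have HzB : last x (map snd P) \in B := filter_eq_seq1 HfB.
have Hsides : (x \in R) != (last x (map snd P) \in R).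
  by rewrite (same_side _ _ (HA _ HxA)) (same_side _ _ (HB _ HzB)) Ha0 (negPf Hb0).
have [e He Hcut_e] := walk_crosses_cut Hw Hsides.
by move/allP: Hall => /(_ e He); rewrite Hcut_e.
Qed.
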